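(* Let $\mathcal A$ be a linear time-invariant algorithm with state-space realization $(A,B,C,D)$. Then an algorithm $\mathcal B$ satisfies $\mathcal B=\mathcal A^2$ if and only if the transfer function of $\mathcal B$ is $$\begin{bmatrix} C(zI-A^2)^{-1}AB+D & C(zI-A^2)^{-1}B\\ CA(zI-A^2)^{-1}AB+CB & CA(zI-A^2)^{-1}B+D\end{bmatrix}.$$
   Context: A linear time-invariant algorithm $\mathcal A$ with state-space realization $(A,B,C,D)$ and oracle map $\phi$ generates $x^{k+1}=Ax^k+Bu^k$, $y^k=Cx^k+Du^k$, $u^k=\phi(y^k)$; it can be viewed as the map $x^k\mapsto x^{k+1}$. Its transfer function is $\hat H(z)=C(zI-A)^{-1}B+D$. The algorithm $\mathcal A^2$ (repetition) performs two iterations of $\mathcal A$ as a single iteration: its state is $x^{2k}$ of $\mathcal A$, its oracle outputs in one iteration are $(u^{2k},u^{2k+1})$ and its oracle arguments are $(y^{2k},y^{2k+1})$, in this order. *)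

From HB Require Import structures.
From mathcomp Require Import all_boot all_order all_algebra.
Set Implicit Arguments. Unset Strict Implicit. Unset Printing Implicit Defensive.
Import Order.TTheory GRing.Theory Num.Theory.
Local Open Scope ring_scope.

(* A linear time-invariant algorithm, represented by its state-space
   realization (A, B, C, D) over a field R:
     x^{k+1} = A x^k + B u^k,  y^k = C x^k + D u^k,  u^k = phi(y^k),
   with state dimension n, n_u = m oracle outputs, n_y = p oracle arguments
   (column-vector convention). *)
Record lti (R : fieldType) (n m p : nat) := LTI {
  ssA : 'M[R]_n ; ssB : 'M[R]_(n, m) ; ssC : 'M[R]_(p, n) ; ssD : 'M[R]_(p, m) }.

Notation ratf R := {fraction {poly R}}.

Definition cst_rf (R : fieldType) (c : R) : ratf R := tofrac (c%:P).
Definition zvar (R : fieldType) : ratf R := tofrac 'X.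
Definition lift_mx (R : fieldType) k l (M : 'M[R]_(k, l)) : 'M[ratf R]_(k, l) :=
  map_mx (@cst_rf R) M.

Definition resolvent (R : fieldType) n (M : 'M[R]_n) : 'M[ratf R]_n :=
  invmx ((zvar R)%:M - lift_mx M).

Definition transfer (R : fieldType) n m p (S : lti R n m p) : 'M[ratf R]_(p, m) :=
  lift_mx (ssC S) *m resolvent (ssA S) *m lift_mx (ssB S) + lift_mx (ssD S).

(* The repetition A^2: two iterations of A performed as one iteration.
   State x^{2k}; oracle outputs (u^{2k}, u^{2k+1}); oracle arguments
   (y^{2k}, y^{2k+1}).  From
     x^{2k+2} = A^2 x^{2k} + A B u^{2k} + B u^{2k+1},
     y^{2k}   = C x^{2k} + D u^{2k},
     y^{2k+1} = C A x^{2k} + C B u^{2k} + D u^{2k+1}. *)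
Definition repeat2 (R : fieldType) n m p (S : lti R n m p) : lti R n (m + m) (p + p) :=
  LTI (ssA S ^+ 2)
      (row_mx (ssA S *m ssB S) (ssB S))
      (col_mx (ssC S) (ssC S *m ssA S))
      (block_mx (ssD S) 0 (ssC S *m ssB S) (ssD S)).

Definition alg_eq (R : fieldType) n1 n2 m p (S1 : lti R n1 m p) (S2 : lti R n2 m p) :=
  transfer S1 = transfer S2.

From HB Require Import structures.
From mathcomp Require Import all_boot all_order all_algebra.
Import GRing.Theory.
Local Open Scope ring_scope.

(* The realization of A^2 has state matrix A^2, input matrix [AB B], output
   matrix [C; CA] and feedthrough [D 0; CB D]; expanding C'(zI - A^2)^{-1}B' + D'
   blockwise gives the claimed transfer function. *)

Section LiftMx.
Variable R : fieldType.

Definition cst_rmorphism : {rmorphism R -> ratf R} := (@tofrac _) \o polyC.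

Lemma lift_mxE k l (M : 'M[R]_(k, l)) : lift_mx M = map_mx cst_rmorphism M.
Proof. by []. Qed.

Lemma lift_mxM k l q (M : 'M[R]_(k, l)) (N : 'M[R]_(l, q)) :
  lift_mx (M *m N) = lift_mx M *m lift_mx N.
Proof. by rewrite !lift_mxE map_mxM. Qed.

Lemma lift_mx0 k l : lift_mx (0 : 'M[R]_(k, l)) = 0.
Proof. by rewrite lift_mxE map_mx0. Qed.

End LiftMx.

Lemma mul_col_row_add_block (F : pzRingType) (n m p : nat)
    (C1 C2 : 'M[F]_(p, n)) (M : 'M[F]_n) (B1 B2 : 'M[F]_(n, m))
    (D11 D12 D21 D22 : 'M[F]_(p, m)) :
  col_mx C1 C2 *m M *m row_mx B1 B2 + block_mx D11 D12 D21 D22 =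
  block_mx (C1 *m M *m B1 + D11) (C1 *m M *m B2 + D12)
           (C2 *m M *m B1 + D21) (C2 *m M *m B2 + D22).
Proof. by rewrite mul_col_mx mul_col_row add_block_mx. Qed.

Lemma transfer_repeat2 (R : fieldType) (n m p : nat) (S : lti R n m p) :
  transfer (repeat2 S) =
    (let A := lift_mx (ssA S) in let B := lift_mx (ssB S) in
     let C := lift_mx (ssC S) in let D := lift_mx (ssD S) in
     let Res := resolvent (ssA S ^+ 2) in
     block_mx (C *m Res *m A *m B + D)      (C *m Res *m B)
              (C *m A *m Res *m A *m B + C *m B) (C *m A *m Res *m B + D)).
Proof.
rewrite /transfer /= !lift_mxE map_row_mx map_col_mx map_block_mx -!lift_mxE.
by rewrite lift_mx0 !lift_mxM mul_col_row_add_block !addr0 !mulmxA.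
Qed.

Theorem proposition7p1 (R : fieldType) (n m p : nat) (S : lti R n m p)
    (n' : nat) (T : lti R n' (m + m) (p + p)) :
  alg_eq T (repeat2 S) <->
  transfer T =
    (let A := lift_mx (ssA S) in let B := lift_mx (ssB S) in
     let C := lift_mx (ssC S) in let D := lift_mx (ssD S) in
     let Res := resolvent (ssA S ^+ 2) in
     block_mx (C *m Res *m A *m B + D)      (C *m Res *m B)
              (C *m A *m Res *m A *m B + C *m B) (C *m A *m Res *m B + D)).
Proof. by rewrite /alg_eq transfer_repeat2. Qed.
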